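(* Let $S=K[x_1,\dots,x_n]$ with $K$ a field or $\mathbb{Z}$, let $I\subseteq S$ be a monomial ideal, and let $C_\bullet$ be a minimal free resolution of $S/I$ whose free modules are given $\mathbb{N}^n$-homogeneous bases (so all matrices are $\mathbb{N}^n$-graded). If $Z$ is a subset of the variables and $T=S/(Z)$, then the pruning $P(C_\bullet,Z)$ is a minimal free resolution of $S/I\otimes_S T$ as a $T$-module.
   Context: Pruning. Let $C_\bullet$ be a sequence of free $S$-modules with chosen bases $F_t\xrightarrow{A_t}F_{t-1}\to\cdots\to F_1\xrightarrow{A_1}F_0$, so each map is a matrix $A_i$ (columns indexed by the basis of $F_i$, rows by the basis of $F_{i-1}$). The pruning $P(C_\bullet,Z)$ is obtained by the following procedure: for $i=1,2,\dots,t$ in turn, replace the current matrix $A_i$ by the matrix obtained by setting every variable of $Z$ equal to $0$; let $U$ be the set of columns of this new $A_i$ that are identically zero; then delete from $F_i$ the basis elements indexed by $U$, delete from $A_i$ the columns indexed by $U$, and delete from $A_{i+1}$ (if $i<t$) the rows indexed by $U$. The resulting sequence of matrices and (shrunken) free modules is regarded as a sequence of free $T$-modules and maps, $T=S/(Z)$. *)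

From HB Require Import structures.
From mathcomp Require Import all_boot all_algebra.
From mathcomp Require Import mpoly.
Set Implicit Arguments. Unset Strict Implicit. Unset Printing Implicit Defensive.
Import GRing.Theory.
Local Open Scope ring_scope.

Section Pruning.
Variables (R : comNzRingType) (n : nat).
Local Notation S := {mpoly R[n]}.

Definition zsub (Z : {set 'I_n}) (p : S) : S :=
  comp_mpoly [tuple (if i \in Z then 0 else 'X_i : S) | i < n] p.

Definition monomial_ideal (k : nat) (g : 'I_k -> 'X_{1..n}) (p : S) : Prop :=
  exists q : 'I_k -> S, p = \sum_(j < k) q j * 'X_[g j].

Definition supported (m : nat) (E : {set 'I_m}) (P : S -> Prop)
  (v : 'cV[S]_m) : Prop :=
  forall j, P (v j 0) /\ (j \notin E -> v j 0 = 0).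

(* [is_min_free_res P J t r E A]: the sequence
     F_t --A t--> ... --A 1--> F_0 (--> P/J --> 0)
   of free P-modules, F_i having basis indexed by E i (a subset of 'I_(r i)),
   is a minimal free resolution of the cyclic P-module P/J; here P is the
   coefficient ring (a subring of S containing all entries), J an ideal of P.
   A i is an (r (i-1)) x (r i) matrix (columns = basis of F_i). *)
Definition is_min_free_res (P J : S -> Prop) (t : nat) (r : nat -> nat)
  (E : forall i, {set 'I_(r i)}) (A : forall i, 'M[S]_(r i.-1, r i)) : Prop :=
  [/\ [/\ r 0 = 1%N, E 0 = setT & r t.+1 = 0%N],
   (forall i, (1 <= i <= t)%N -> forall a b,
       P (A i a b) /\ ((a \notin E i.-1) || (b \notin E i) -> A i a b = 0)),
   (forall i, (1 <= i <= t)%N -> A i *m A i.+1 = 0),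
   ((* exactness at F_0: the image of F_1 in F_0 = P is exactly J *)
   (forall p, P p -> (J p <-> exists v, supported (E 1%N) P v /\
                                 forall a, (A 1%N *m v) a 0 = p)) /\
   (* exactness at F_i, 1 <= i <= t (at i = t: injectivity, as F_(t+1) = 0) *)
   (forall i, (1 <= i <= t)%N -> forall v, supported (E i) P v ->
       A i *m v = 0 -> exists w, supported (E i.+1) P w /\ A i.+1 *m w = v)) &
   (* minimality: all entries lie in the ideal (x_1, ..., x_n) *)
   (forall i, (1 <= i <= t)%N -> forall a b, (A i a b)@_0%MM = 0)].

Definition multigraded (t : nat) (r : nat -> nat)
  (deg : forall i, 'I_(r i) -> 'X_{1..n}) (A : forall i, 'M[S]_(r i.-1, r i))
  : Prop :=
  forall i, (1 <= i <= t)%N -> forall a b,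
    A i a b = 0 \/ exists (c : R) (m : 'X_{1..n}),
      A i a b = c *: 'X_[m] /\ (m + deg i.-1 a)%MM = deg i b.

(* Deleting basis elements is recorded by the set of basis elements
   still kept: kept 0 = everything; at step i the column c of (A i with the
   rows deleted at step i-1, Z-variables set to 0) is kept iff it is nonzero. *)
Fixpoint kept (Z : {set 'I_n}) (r : nat -> nat)
  (A : forall i, 'M[S]_(r i.-1, r i)) (i : nat) : {set 'I_(r i)} :=
  match i return {set 'I_(r i)} with
  | 0 => setT
  | j.+1 => [set c : 'I_(r j.+1) |
             [exists a : 'I_(r j), (a \in kept Z A j) &&
                                   (zsub Z (A j.+1 a c) != 0)]]
  end.

Definition pruned (Z : {set 'I_n}) (r : nat -> nat)
  (A : forall i, 'M[S]_(r i.-1, r i)) (i : nat) : 'M[S]_(r i.-1, r i) :=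
  \matrix_(a, b) (if (a \in kept Z A i.-1) && (b \in kept Z A i)
                  then zsub Z (A i a b) else 0).

(* T = S/(Z) is modelled by the subring of polynomials not involving the
   variables of Z (those fixed by zsub); S/I (x) T = T / (image of I). *)
Definition Tring (Z : {set 'I_n}) (p : S) : Prop := zsub Z p = p.
Definition Tideal (Z : {set 'I_n}) (k : nat) (g : 'I_k -> 'X_{1..n}) (q : S)
  : Prop := exists p, monomial_ideal g p /\ zsub Z p = q.

End Pruning.

From HB Require Import structures.
From mathcomp Require Import all_boot all_algebra.
From mathcomp Require Import mpoly.
From mathcomp Require Import zify.
Set Implicit Arguments. Unset Strict Implicit. Unset Printing Implicit Defensive.
Import GRing.Theory.
Local Open Scope ring_scope.

(* Every column of a minimal resolution has a nonzero entry: a zero column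
   would be a cycle, hence a boundary, but boundaries have entries without
   constant term while the unit vector has one.  By multigradedness the
   multidegrees of the basis elements therefore dominate the multidegree of
   the generator of F_0, and a basis element survives the pruning exactly when
   its multidegree agrees with that of F_0 in the Z-coordinates.  A nonzero
   entry in a surviving column then involves no variable of Z, so it is
   unchanged by Z := 0 and sits in a surviving row, while a surviving row has
   only zero entries, after Z := 0, in deleted columns.  Consequently the
   pruned complex is C_. with Z := 0 restricted to the surviving summands:
   it is a complex, and a lift in C_. of a pruned cycle becomes, after
   Z := 0 and restriction, a lift in the pruned complex. *)

Section ZeroSubstitution.
Variables (R : comNzRingType) (n : nat) (Z : {set 'I_n}).
Local Notation S := {mpoly R[n]}.

HB.instance Definition _ := GRing.RMorphism.copy (zsub Z)
  (comp_mpoly [tuple (if i \in Z then 0 else 'X_i : S) | i < n]).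

Definition zfree (m : 'X_{1..n}) := [forall j, (j \in Z) ==> (m j == 0%N)].

Lemma zsubZX (c : R) (m : 'X_{1..n}) :
  zsub Z (c *: 'X_[m]) = if zfree m then c *: 'X_[m] else 0.
Proof.
rewrite /zsub comp_mpolyZ comp_mpolyX.
case: ifP => [/forallP m_Z0 | /negbT].
  congr (_ *: _); rewrite [RHS]mpolyXE_id; apply: eq_bigr => i _.
  rewrite tnth_mktuple; case: ifP => // iZ.
  by move: (m_Z0 i); rewrite iZ => /eqP ->; rewrite !expr0.
rewrite negb_forall => /existsP [j]; rewrite negb_imply => /andP [jZ mj].
by rewrite (bigD1 j) //= tnth_mktuple jZ expr0n (negbTE mj) mul0r scaler0.
Qed.

Lemma zsubE (p : S) :
  zsub Z p = \sum_(m <- msupp p) (if zfree m then p@_m *: 'X_[m] else 0).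
Proof. by rewrite {1}(mpolyE p) rmorph_sum; apply: eq_bigr => m _; apply: zsubZX. Qed.

Lemma zsubK (p : S) : zsub Z (zsub Z p) = zsub Z p.
Proof.
rewrite [zsub Z p]zsubE rmorph_sum /=; apply: eq_bigr => m _.
by case: ifP => m_Z; rewrite ?zsubZX ?m_Z ?rmorph0.
Qed.

Lemma Tring_zsub (p : S) : Tring Z (zsub Z p).
Proof. by rewrite /Tring zsubK. Qed.

End ZeroSubstitution.

Lemma mulmx_col (R : pzSemiRingType) m p q (M : 'M[R]_(m, p)) (N : 'M_(p, q)) a c :
  (M *m N) a c = (M *m col c N) a 0.
Proof. by rewrite [LHS]mxE [RHS]mxE; apply: eq_bigr => b _; rewrite mxE. Qed.

Section Pruning.
Unset Implicit Arguments.
Variables (K : comNzRingType) (n k : nat) (g : 'I_k -> 'X_{1..n})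
  (t : nat) (r : nat -> nat) (A : forall i, 'M[{mpoly K[n]}]_(r i.-1, r i))
  (deg : forall i, 'I_(r i) -> 'X_{1..n}) (Z : {set 'I_n}).
Set Implicit Arguments.
Local Notation S := {mpoly K[n]}.
Local Notation kept := (kept Z A).
Local Notation pruned := (pruned Z A).

Hypothesis A_graded : multigraded t deg A.
Hypothesis r0_eq1 : r 0 = 1%N.
Hypothesis rt1_eq0 : r t.+1 = 0%N.
Hypothesis A_complex : forall i, (1 <= i <= t)%N -> A i *m A i.+1 = 0.
Hypothesis A_image : forall p : S, True -> (monomial_ideal g p <->
   exists v, supported [set: 'I_(r 1)] (fun _ => True) v /\
             forall a, (A 1%N *m v) a 0 = p).
Hypothesis A_exact : forall i, (1 <= i <= t)%N -> forall v,
   supported [set: 'I_(r i)] (fun _ => True) v ->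
   A i *m v = 0 -> exists w, supported [set: 'I_(r i.+1)] (fun _ => True) w
                             /\ A i.+1 *m w = v.
Hypothesis A_minimal : forall i, (1 <= i <= t)%N -> forall a b,
  (A i a b)@_0%MM = 0.

Lemma supported_setT m (v : 'cV[S]_m) : supported [set: 'I_m] (fun _ => True) v.
Proof. by move=> j; rewrite in_setT. Qed.

Definition gen0 : 'I_(r 0) := cast_ord (esym r0_eq1) ord0.

Lemma gen0_uniq (x : 'I_(r 0)) : x = gen0.
Proof.
apply: val_inj => /=; move: (ltn_ord x).
by rewrite [X in (_ < X)%N]r0_eq1; case: (nat_of_ord x).
Qed.

Lemma col_nonzero i : (1 <= i <= t)%N -> forall b : 'I_(r i),
  exists a, A i a b != 0.
Proof.
move=> Hi b; apply/existsP; apply: contraT; rewrite negb_exists => /forallP Ab0.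
pose e : 'cV[S]_(r i) := \col_j (j == b)%:R.
have Ae0 : A i *m e = 0.
  apply/matrixP => a c; rewrite !mxE (bigD1 b) //= big1 => [|j /negbTE jb].
    by rewrite mxE eqxx mulr1 addr0; apply/eqP; move: (Ab0 a); rewrite negbK.
  by rewrite mxE jb mulr0.
have [w [_ /matrixP/(_ b 0)/(congr1 (mcoeff 0%MM))]] :=
  A_exact Hi (supported_setT e) Ae0.
rewrite !mxE eqxx mcoeff1 eqxx raddf_sum big1 => [/esym/eqP|c _].
  by rewrite oner_eq0.
case: (ltngtP i t) => [lt_it | gt_it | eq_it].
- by rewrite /= (rmorphM (mcoeff 0%MM)) /= A_minimal ?mul0r // lt_it.
- by case/andP: Hi => _; rewrite leqNgt gt_it.
- by subst i; have : (c < 0)%N by rewrite -rt1_eq0.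
Qed.

Lemma graded_entry i : (i < t)%N -> forall a b, A i.+1 a b != 0 ->
  exists c m, A i.+1 a b = c *: 'X_[m] /\
              forall j, deg i.+1 b j = (m j + deg i a j)%N.
Proof.
move=> lt_it a b; case: (@A_graded i.+1 lt_it a b) => [-> | [c [m [Aab deg_b]]] _].
  by rewrite eqxx.
by exists c, m; split=> // j; rewrite -deg_b mnmDE.
Qed.

Definition Zbase i (b : 'I_(r i)) :=
  forall j, j \in Z -> deg i b j = deg 0 gen0 j.

Lemma gen0_deg_le i : (i <= t)%N -> forall (b : 'I_(r i)) j,
  (deg 0 gen0 j <= deg i b j)%N.
Proof.
elim: i => [_ b j | i IH lt_it b j]; first by rewrite (gen0_uniq b).
have [a Aab] := col_nonzero (lt_it : 1 <= i.+1 <= t)%N b.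
have [c [m [_ ->]]] := graded_entry lt_it Aab.
exact: leq_trans (IH (ltnW lt_it) a j) (leq_addl _ _).
Qed.

Lemma Zbase_entry i : (i <= t)%N ->
  forall (a : 'I_(r i)) (b : 'I_(r i.+1)) (m : 'X_{1..n}),
  (forall j, deg i.+1 b j = (m j + deg i a j)%N) -> Zbase b ->
  zfree Z m /\ Zbase a.
Proof.
move=> le_it a b m deg_b Zb.
have Zm j : j \in Z -> m j = 0%N /\ deg i a j = deg 0 gen0 j.
  by move=> jZ; move: (Zb j jZ) (gen0_deg_le le_it a j); rewrite deg_b; lia.
by split=> [|j /Zm []//]; apply/forallP => j; apply/implyP => /Zm [->].
Qed.

Lemma keptP i : (i <= t)%N -> forall b : 'I_(r i), b \in kept i <-> Zbase b.
Proof.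
elim: i => [_ b | i IH lt_it b].
  by rewrite (gen0_uniq b) in_setT; split=> // _ j.
rewrite inE; split.
  case/existsP => a /andP [ka zAab].
  have Aab : A i.+1 a b != 0 by apply: contraNneq zAab => ->; rewrite rmorph0.
  have [c [m [Aab_eq deg_b]]] := graded_entry lt_it Aab.
  move: zAab; rewrite Aab_eq zsubZX.
  case: ifP => [/forallP Zm _ | _]; last by rewrite eqxx.
  move=> j jZ; rewrite deg_b -((IH (ltnW lt_it) a).1 ka j jZ).
  by move: (Zm j); rewrite jZ => /eqP ->.
move=> Zb; have [a Aab] := col_nonzero (lt_it : 1 <= i.+1 <= t)%N b.
have [c [m [Aab_eq deg_b]]] := graded_entry lt_it Aab.
have [Zm Za] := Zbase_entry (ltnW lt_it) deg_b Zb.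
apply/existsP; exists a.
by rewrite (IH (ltnW lt_it) a).2 // Aab_eq zsubZX Zm -Aab_eq.
Qed.

Lemma pruned_kept_col i : (i <= t)%N -> forall a (b : 'I_(r i.+1)),
  b \in kept i.+1 -> pruned i.+1 a b = A i.+1 a b.
Proof.
move=> le_it a b kb; case: (ltngtP i t) => [lt_it | gt_it | eq_it]; last first.
- by subst i; have : (b < 0)%N by rewrite -rt1_eq0.
- by move: le_it; rewrite leqNgt gt_it.
rewrite mxE kb andbT.
have [-> | Aab] := eqVneq (A i.+1 a b) 0; first by rewrite rmorph0 if_same.
have [c [m [Aab_eq deg_b]]] := graded_entry lt_it Aab.
have [Zm Za] := Zbase_entry le_it deg_b ((keptP lt_it b).1 kb).
by rewrite ((keptP le_it a).2 Za) Aab_eq zsubZX Zm.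
Qed.

Lemma pruned_mul_supported i (P : S -> Prop) (v : 'cV_(r i.+1)) :
  (i <= t)%N -> supported (kept i.+1) P v -> pruned i.+1 *m v = A i.+1 *m v.
Proof.
move=> le_it sv; apply/matrixP => a c; rewrite (ord1 c) [LHS]mxE [RHS]mxE.
apply: eq_bigr => b _.
have [kb | nkb] := boolP (b \in kept i.+1); first by rewrite pruned_kept_col.
by rewrite (sv b).2 // !mulr0.
Qed.

Definition prune_vec i (v : 'cV[S]_(r i)) : 'cV[S]_(r i) :=
  \col_j (if j \in kept i then zsub Z (v j 0) else 0).

Lemma supported_prune_vec i (v : 'cV_(r i)) :
  supported (kept i) (Tring Z) (prune_vec v).
Proof.
move=> j; rewrite mxE; split; last by move/negbTE ->.
by case: ifP => _; [apply: Tring_zsub | rewrite /Tring rmorph0].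
Qed.

Lemma pruned_mul_prune_vec i (v : 'cV_(r i.+1)) a :
  (pruned i.+1 *m prune_vec v) a 0 =
  if a \in kept i then zsub Z ((A i.+1 *m v) a 0) else 0.
Proof.
rewrite !mxE; case: ifP => ka; last by apply: big1 => b _; rewrite mxE ka mul0r.
rewrite rmorph_sum; apply: eq_bigr => b _; rewrite !mxE ka rmorphM /=.
case: ifP => // /negbT; rewrite inE negb_exists => /forallP /(_ a).
by rewrite ka negbK => /eqP ->; rewrite !mul0r.
Qed.

Lemma col_pruned i (c : 'I_(r i.+1)) :
  col c (pruned i.+1) =
  if c \in kept i.+1 then prune_vec (col c (A i.+1)) else 0.
Proof.
apply/matrixP => b j; rewrite (ord1 j) !mxE.
by case kc: (c \in kept i.+1); rewrite !mxE ?andbT ?andbF.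
Qed.

Lemma pruned_entry i a b : Tring Z (pruned i a b) /\
  ((a \notin kept i.-1) || (b \notin kept i) -> pruned i a b = 0).
Proof.
rewrite mxE; split; first by case: ifP => _; [apply: Tring_zsub | rewrite /Tring rmorph0].
by case: ifP => // /andP [-> ->].
Qed.

Lemma pruned_complex i : (1 <= i <= t)%N -> pruned i *m pruned i.+1 = 0.
Proof.
case: i => [//|i] Hi; apply/matrixP => a c.
rewrite mulmx_col col_pruned; case: ifP => _; last by rewrite linear0 !mxE.
by rewrite pruned_mul_prune_vec -mulmx_col (A_complex Hi) mxE rmorph0 if_same.
Qed.

Lemma pruned_image p : Tring Z p -> (Tideal Z g p <->
  exists v, supported (kept 1) (Tring Z) v /\ forall a, (pruned 1 *m v) a 0 = p).
Proof.
move=> Tp; split=> [[q [Iq zq]] | [v [sv pv]]].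
  have [v [_ Av]] := (A_image q I).1 Iq.
  exists (prune_vec v); split=> [|a]; first exact: supported_prune_vec.
  by rewrite pruned_mul_prune_vec /= in_setT Av.
exists ((A 1 *m v) gen0 0); split.
  apply/(A_image _ I).2; exists v; split=> [|a]; first exact: supported_setT.
  by rewrite (gen0_uniq a).
by rewrite -(pruned_mul_supported _ sv) // pv.
Qed.

Lemma pruned_exact i : (1 <= i <= t)%N -> forall v,
  supported (kept i) (Tring Z) v -> pruned i *m v = 0 ->
  exists w, supported (kept i.+1) (Tring Z) w /\ pruned i.+1 *m w = v.
Proof.
case: i => [//|i] Hi v sv pv.
have Av : A i.+1 *m v = 0 by rewrite -(pruned_mul_supported (ltnW Hi) sv).
have [w [_ Aw]] := A_exact Hi (supported_setT v) Av.
exists (prune_vec w); split; first exact: supported_prune_vec.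
apply/matrixP => a j; rewrite (ord1 j) pruned_mul_prune_vec Aw.
by case: ifP => ka; [apply: (sv a).1 | rewrite (sv a).2 ?ka].
Qed.

Lemma pruned_minimal i : (1 <= i <= t)%N -> forall a b, (pruned i a b)@_0%MM = 0.
Proof.
case: i => [//|i] Hi a b; have [kb | nkb] := boolP (b \in kept i.+1).
  by rewrite pruned_kept_col ?A_minimal // ltnW.
by rewrite (pruned_entry a b).2 ?nkb ?orbT ?mcoeff0.
Qed.

Lemma pruning_is_min_free_res :
  is_min_free_res (Tring Z) (Tideal Z g) t kept pruned.
Proof.
split=> //; [by move=> i _; apply: pruned_entry | exact: pruned_complex | |
  exact: pruned_minimal].
by split; [exact: pruned_image | exact: pruned_exact].
Qed.

End Pruning.

Theorem mainTheorem2 :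
  forall (K : idomainType),
  ((forall x : K, x != 0 -> x \is a GRing.unit) \/
   (exists f : {rmorphism int -> K}, bijective f)) ->
  forall (n k : nat) (g : 'I_k -> 'X_{1..n})
         (t : nat) (r : nat -> nat)
         (A : forall i, 'M[{mpoly K[n]}]_(r i.-1, r i))
         (deg : forall i, 'I_(r i) -> 'X_{1..n}),
  multigraded t deg A ->
  is_min_free_res (fun _ => True) (monomial_ideal g) t (fun i => setT) A ->
  forall Z : {set 'I_n},
  is_min_free_res (Tring Z) (Tideal Z g) t (kept Z A) (pruned Z A).
Proof.
move=> K _ n k g t r A deg A_graded [[r0_eq1 _ rt1_eq0] _ A_complex
  [A_image A_exact] A_minimal] Z.
exact: pruning_is_min_free_res A_graded r0_eq1 rt1_eq0 A_complex A_image
  A_exact A_minimal.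
Qed.
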